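(* Let $(X,d,\mu)$ be geometrically doubling and upper doubling with fixed dominating function $\lambda$. For $\varrho>1$ denote by $\mathrm{RBMO}_\varrho(\mu)$ the space $\mathrm{RBMO}(\mu)$ defined with parameter $\varrho$. Then $\mathrm{RBMO}_\varrho(\mu)$ does not depend on $\varrho$: for all $\varrho,\sigma>1$, $\mathrm{RBMO}_\varrho(\mu)=\mathrm{RBMO}_\sigma(\mu)$.
   Context: Balls $B=B(x,r)=\{y:d(y,x)<r\}$ have specified centre $c_B=x$ and radius $r_B=r>0$; $tB:=B(x,tr)$. Geometrically doubling: there is $N$ such that every ball $B(x,r)$ is covered by at most $N$ balls of radius $r/2$. Upper doubling: $\mu$ is a Borel measure, finite on bounded sets, and there are $\lambda:X\times(0,\infty)\to(0,\infty)$ and $C_\lambda$ with $r\mapsto\lambda(x,r)$ non-decreasing, $\lambda(x,2r)\le C_\lambda\lambda(x,r)$, $\mu(B(x,r))\le\lambda(x,r)$. A function $f\in L^1_{\mathrm{loc}}(\mu)$ (integrable on bounded sets) belongs to $\mathrm{RBMO}_\varrho(\mu)$ if there exist a number $A$ and, for every ball $B$, a number $f_B$ such that $\frac{1}{\mu(\varrho B)}\int_B|f-f_B|\,d\mu\le A$ for every ball $B$, and whenever $B\subset B_1$ are balls, $|f_B-f_{B_1}|\le A\{1+\int_{2B_1\setminus B}\frac{d\mu(x)}{\lambda(c_B,d(x,c_B))}\}$. The infimum of admissible $A$ is the norm $\|f\|_{\mathrm{RBMO}_\varrho}$. *)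

From HB Require Import structures.
From mathcomp Require Import all_boot all_order all_algebra.
From mathcomp Require Import all_classical all_reals all_analysis.
Set Implicit Arguments. Unset Strict Implicit. Unset Printing Implicit Defensive.
Import Order.TTheory GRing.Theory Num.Theory.
Local Open Scope classical_set_scope.
Local Open Scope ring_scope.

Section RBMO.
Context {disp : measure_display} {X : measurableType disp} {R : realType}.

Definition dball (dist : X -> X -> R) (x : X) (r : R) : set X :=
  [set y | dist y x < r].

Definition is_metric (dist : X -> X -> R) : Prop :=
  [/\ forall x y, 0 <= dist x y,
      forall x y, dist x y = 0 <-> x = y,
      forall x y, dist x y = dist y x &
      forall x y z, dist x z <= dist x y + dist y z].

Definition dopen (dist : X -> X -> R) (U : set X) : Prop :=
  forall x, U x -> exists2 r : R, 0 < r & dball dist x r `<=` U.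

Definition dbounded (dist : X -> X -> R) (A : set X) : Prop :=
  exists x r, A `<=` dball dist x r.

Definition geom_doubling (dist : X -> X -> R) : Prop :=
  exists N : nat, forall (x : X) (r : R), 0 < r ->
    exists s : seq X, (size s <= N)%N /\
      dball dist x r `<=` \bigcup_(y in [set` s]) dball dist y (r / 2).

Local Open Scope ereal_scope.

Definition finite_on_bounded (dist : X -> X -> R)
    (mu : {measure set X -> \bar R}) : Prop :=
  forall A, measurable A -> dbounded dist A -> mu A < +oo.

Definition upper_doubling (dist : X -> X -> R)
    (mu : {measure set X -> \bar R}) (lam : X -> R -> R) (C : R) : Prop :=
  [/\ forall x r, (0 < r)%R -> (0 < lam x r)%R,
      forall x r s, (0 < r)%R -> (r <= s)%R -> (lam x r <= lam x s)%R,
      forall x r, (0 < r)%R -> (lam x (2 * r) <= C * lam x r)%R &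
      forall x r, (0 < r)%R -> mu (dball dist x r) <= (lam x r)%:E].

Definition loc_integrable (dist : X -> X -> R)
    (mu : {measure set X -> \bar R}) (f : X -> R) : Prop :=
  forall A, measurable A -> dbounded dist A -> mu.-integrable A (EFin \o f).

(* f in RBMO_rho(mu); the ball B(x,r) (r > 0) is indexed by its centre
   and radius, and fB x r is the number f_B *)
Definition RBMO (dist : X -> X -> R) (mu : {measure set X -> \bar R})
    (lam : X -> R -> R) (rho : R) (f : X -> R) : Prop :=
  loc_integrable dist mu f /\
  exists (A : R) (fB : X -> R -> R),
    (forall x r, (0 < r)%R ->
       \int[mu]_(y in dball dist x r) (`|f y - fB x r|)%:E
         <= A%:E * mu (dball dist x (rho * r))) /\
    (forall x r x1 r1, (0 < r)%R -> (0 < r1)%R ->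
       dball dist x r `<=` dball dist x1 r1 ->
       (`|fB x r - fB x1 r1|)%:E <=
         A%:E * (1 + \int[mu]_(y in dball dist x1 (2 * r1) `\` dball dist x r)
                      ((lam x (dist y x))^-1)%:E)).

End RBMO.

(* The coefficients f_B are kept and only the constant grows.  Cover a ball
   B = B(x, r) by at most N^k balls B_i of radius r / 2^k, with k so large that
   rho B_i lies in sigma B.  On B /\ B_i,
     |f - f_B| <= |f - f_{B_i}| + |f_{B_i} - f_{sigma B}| + |f_{sigma B} - f_B|.
   The first term integrates to at most A mu(rho B_i) <= A mu(sigma B).  Each
   coefficient difference is at most A (1 + C^m): for B' = B_i or B' = B the
   annulus 2 (sigma B) \ B' lies in 2^m B', where 1 / lambda(c_B', d(., c_B'))
   is at most 1 / lambda(c_B', r_B') and mu(2^m B') <= C^m lambda(c_B', r_B').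
   The argument is symmetric in rho and sigma. *)

From HB Require Import structures.
From mathcomp Require Import all_boot all_order all_algebra.
From mathcomp Require Import all_classical all_reals all_analysis.
From mathcomp Require Import measurable_realfun ring lra.
Import Order.TTheory GRing.Theory Num.Theory.
Local Open Scope classical_set_scope.
Local Open Scope ring_scope.

Section metric_balls.
Context {disp : measure_display} {X : measurableType disp} {R : realType}.
Context {dist : X -> X -> R} (dist_metric : is_metric dist).

Lemma dist_sym x y : dist x y = dist y x. Proof. by case: dist_metric. Qed.

Lemma dist_triangle x y z : dist x z <= dist x y + dist y z.
Proof. by case: dist_metric. Qed.

Lemma dist_refl x : dist x x = 0.
Proof. by case: dist_metric => _ h _ _; apply/h. Qed.

Lemma dball_sub c r' x r : dist c x + r' <= r ->
  dball dist c r' `<=` dball dist x r.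
Proof.
move=> h z hz; apply: le_lt_trans (dist_triangle z c x) _.
by rewrite addrC; apply: lt_le_trans h; rewrite ltrD2l.
Qed.

Lemma dopen_dball x r : dopen dist (dball dist x r).
Proof.
move=> y hy; exists (r - dist y x); first by rewrite subr_gt0.
move=> z hz; apply: le_lt_trans (dist_triangle z y x) _.
by rewrite -ltrBrDr.
Qed.

Context (measurable_dopen : @measurable disp X = <<s dopen dist >>).

Lemma measurable_dball x r : measurable (dball dist x r).
Proof. by rewrite measurable_dopen; apply: sub_gen_smallest; exact: dopen_dball. Qed.

End metric_balls.

Lemma dbounded_dball {disp : measure_display} {X : measurableType disp}
    {R : realType} (dist : X -> X -> R) x r : dbounded dist (dball dist x r).
Proof. by exists x, r. Qed.

Section doubling_cover.
Context {disp : measure_display} {X : measurableType disp} {R : realType}.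
Context {dist : X -> X -> R} {N : nat}.
Context (doubling : forall x r, 0 < r -> exists s : seq X, (size s <= N)%N /\
  dball dist x r `<=` \bigcup_(y in [set` s]) dball dist y (r / 2)).

Lemma bigcup_dball_halve r (s : seq X) : 0 < r -> exists s' : seq X,
  (size s' <= N * size s)%N /\
  \bigcup_(y in [set` s]) dball dist y r `<=`
  \bigcup_(y in [set` s']) dball dist y (r / 2).
Proof.
move=> r0; elim: s => [|y s [s' [size_s' cover_s']]].
  by exists [::]; split => // z [].
have [sy [size_sy cover_sy]] := @doubling y r r0.
exists (sy ++ s'); split; first by rewrite size_cat /= mulnS leq_add.
move=> z [y0]; rewrite /= inE => /orP[/eqP -> /cover_sy [y1 y1s h1]|y0s hz].
  by exists y1 => //=; rewrite mem_cat y1s.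
have [y1 y1s h1] := cover_s' z (ex_intro2 _ _ y0 y0s hz).
by exists y1 => //=; rewrite mem_cat y1s orbT.
Qed.

Lemma dball_cover_pow2 k x r : 0 < r -> exists s : seq X,
  (size s <= N ^ k)%N /\
  dball dist x r `<=` \bigcup_(y in [set` s]) dball dist y (r / 2 ^+ k).
Proof.
move=> r0; elim: k => [|k [s [size_s cover_s]]].
  by exists [:: x]; split => // z hz; exists x; rewrite /= ?inE ?expr0 ?divr1.
have [|s' [size_s' cover_s']] := @bigcup_dball_halve (r / 2 ^+ k) s.
  by rewrite divr_gt0 // exprn_gt0.
exists s'; split; first by rewrite expnS (leq_trans size_s') // leq_mul2l size_s orbT.
have -> : r / 2 ^+ k.+1 = r / 2 ^+ k / 2 by rewrite exprS; field; rewrite expf_neq0.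
by move=> z /cover_s /cover_s'.
Qed.

End doubling_cover.

Section nonneg_integral.
Context {d : measure_display} {T : measurableType d} {R : realType}.
Variable mu : {measure set T -> \bar R}.
Local Open Scope ereal_scope.

(* Unlike [ge0_le_integral], no measurability is needed: a nonnegative
   integral is the supremum of the integrals of the simple functions below
   the integrand. *)
Lemma ge0_le_integral_nonmeasurable D (f g : T -> \bar R) :
  (forall x, D x -> 0 <= f x) -> (forall x, D x -> f x <= g x) ->
  \int[mu]_(x in D) f x <= \int[mu]_(x in D) g x.
Proof.
move=> f0 fg.
have g0 x : D x -> 0 <= g x by move=> Dx; exact: le_trans (f0 _ Dx) (fg _ Dx).
rewrite (ge0_integralE mu f0) (ge0_integralE mu g0) /=.
apply: ereal_sup_le => _ [h hf <-]; exists h => //= x.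
apply: le_trans (hf x) _; rewrite /patch; case: ifP => // /[1!inE] Dx.
exact: fg.
Qed.

Lemma ge0_integral_le_sum_cover {I : eqType} (F : I -> set T) (s : seq I)
    D (g : T -> \bar R) :
  (forall i, measurable (F i)) -> measurable D -> measurable_fun D g ->
  (forall x, D x -> 0 <= g x) -> D `<=` \bigcup_(i in [set` s]) F i ->
  \int[mu]_(x in D) g x <= \sum_(i <- s) \int[mu]_(x in D `&` F i) g x.
Proof.
move=> mF; elim: s D => [|i s IH] D mD mg g0 cover.
  have -> : D = set0 by apply/seteqP; split => // z /cover [].
  by rewrite integral_set0 big_nil.
have DE : D = (D `&` F i) `|` (D `\` F i).
  by apply/seteqP; split => [z Dz|z [[]|[]]] //; have [] := pselect (F i z); [left|right].
rewrite big_cons {1}DE ge0_integral_setU -?DE //; last 3 first.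
- exact: measurableI.
- exact: measurableD.
- by apply/disj_setPS => z [[_ ?] [_ ?]].
rewrite leeD2l //; apply: le_trans (IH _ (measurableD mD (mF i)) _ _ _) _.
- exact: measurable_funS mg.
- by move=> z [Dz _]; exact: g0.
- move=> z [/cover [j] /=]; rewrite inE => /orP[/eqP -> //|js Fjz] _.
  by exists j.
apply: lee_sum => j _; apply: ge0_subset_integral.
- exact: measurableI (measurableD mD (mF i)) (mF j).
- exact: measurableI.
- exact: measurable_funS mg.
- by move=> z [Dz _]; exact: g0.
- by move=> z [[Dz _] Fjz].
Qed.

End nonneg_integral.

Section upper_doubling_bounds.
Context {disp : measure_display} {X : measurableType disp} {R : realType}.
Context {dist : X -> X -> R} {mu : {measure set X -> \bar R}}.
Context {lam : X -> R -> R} {C : R}.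
Context (mu_upper_doubling : upper_doubling dist mu lam C).

Lemma upper_doubling_pow2 x r m : 0 < r ->
  lam x (2 ^+ m * r) <= C ^+ m * lam x r.
Proof.
case: mu_upper_doubling => lam_gt0 _ lam_dbl _ r0.
have C_ge0 : 0 <= C.
  have : 0 < C * lam x r.
    by apply: lt_le_trans (lam_dbl x r r0); rewrite lam_gt0 // mulr_gt0.
  by rewrite pmulr_lgt0 ?lam_gt0 // => /ltW.
elim: m => [|m IH]; first by rewrite expr0 !mul1r.
rewrite exprS -mulrA; apply: le_trans (lam_dbl _ _ _) _.
  by rewrite mulr_gt0 // exprn_gt0.
by rewrite exprS -mulrA ler_wpM2l.
Qed.

Local Open Scope ereal_scope.

Lemma integral_inv_lam_ge0 c E (r : R) : (0 < r)%R ->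
  0 <= \int[mu]_(y in E `\` dball dist c r) ((lam c (dist y c))^-1)%:E.
Proof.
case: mu_upper_doubling => lam_gt0 _ _ _ r0; apply: integral_ge0 => y [_ hy].
rewrite lee_fin invr_ge0 ltW // lam_gt0 //.
by apply: lt_le_trans r0 _; rewrite leNgt; apply/negP.
Qed.

Context (measurable_dball : forall x r, measurable (dball dist x r)).

Lemma integral_inv_lam_annulus c (r : R) m D : (0 < r)%R -> measurable D ->
  D `<=` dball dist c (2 ^+ m * r) `\` dball dist c r ->
  \int[mu]_(y in D) ((lam c (dist y c))^-1)%:E <= (C ^+ m)%:E.
Proof.
move=> r0 mD sub.
case: mu_upper_doubling => lam_gt0 lam_mono _ mu_le_lam.
have lam_r0 := lam_gt0 c r r0.
have r_le z : D z -> (r <= dist z c)%R.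
  by move=> /sub[_]; rewrite /dball /= => /negP; rewrite -leNgt.
apply: le_trans (@ge0_le_integral_nonmeasurable _ _ _ mu D _
  (fun=> ((lam c r)^-1)%:E) _ _) _.
- move=> z /r_le rz; rewrite lee_fin invr_ge0 ltW // lam_gt0 //.
  exact: lt_le_trans r0 rz.
- move=> z /r_le rz; rewrite lee_fin lef_pV2 ?posrE ?lam_gt0 //.
    exact: lam_mono.
  exact: lt_le_trans r0 rz.
rewrite integral_cst //.
have muD : mu D <= (C ^+ m * lam c r)%:E.
  apply: le_trans (le_measure mu (mem_set mD) (mem_set (measurable_dball c (2 ^+ m * r)))
    (fun z Dz => (sub z Dz).1)) _.
  apply: le_trans (mu_le_lam _ _ _) _; first by rewrite mulr_gt0 // exprn_gt0.
  by rewrite lee_fin upper_doubling_pow2.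
apply: le_trans (lee_wpmul2l _ muD) _; first by rewrite lee_fin invr_ge0 ltW.
by rewrite -EFinM lee_fin mulrCA mulVf ?mulr1 // lt0r_neq0.
Qed.

End upper_doubling_bounds.

Lemma exists_pow2_ge {R : realType} (q : R) : 0 <= q -> exists k : nat, q <= 2 ^+ k.
Proof.
move=> q0; exists (Num.Def.archi_bound q).
apply: le_trans (ltW (archi_boundP q0)) _.
by rewrite -natrX ler_nat ltnW // ltn_expl.
Qed.

Section rbmo_change_param.
Context {disp : measure_display} {X : measurableType disp} {R : realType}.
Context {dist : X -> X -> R} {mu : {measure set X -> \bar R}}.
Context {lam : X -> R -> R} {C : R}.
Hypothesis dist_metric : is_metric dist.
Hypothesis measurable_dopen : @measurable disp X = <<s dopen dist >>.
Hypothesis dist_doubling : geom_doubling dist.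
Hypothesis mu_upper_doubling : upper_doubling dist mu lam C.
Context {rho sigma A : R} {f : X -> R} {fB : X -> R -> R}.
Hypothesis rho_gt1 : 1 < rho.
Hypothesis sigma_gt1 : 1 < sigma.
Hypothesis f_locint : loc_integrable dist mu f.
Hypothesis f_osc : forall x r, 0 < r ->
  (\int[mu]_(y in dball dist x r) (`|f y - fB x r|)%:E
     <= A%:E * mu (dball dist x (rho * r)))%E.
Hypothesis fB_compat : forall x r x1 r1, 0 < r -> 0 < r1 ->
  dball dist x r `<=` dball dist x1 r1 ->
  ((`|fB x r - fB x1 r1|)%:E <=
     A%:E * (1 + \int[mu]_(y in dball dist x1 (2 * r1) `\` dball dist x r)
                  ((lam x (dist y x))^-1)%:E))%E.

Let sigma_gt0 : 0 < sigma := lt_trans ltr01 sigma_gt1.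
Let measurable_ball := measurable_dball dist_metric measurable_dopen.
Let ball_sub := dball_sub dist_metric.

Lemma measurable_fun_abs_subr D c : measurable D -> dbounded dist D ->
  measurable_fun D (fun y => (`|f y - c|)%:E).
Proof.
move=> mD bD; apply/measurable_EFinP/measurableT_comp; first exact: normr_measurable.
apply: measurable_funB => //.
by have /integrableP[/measurable_EFinP] := f_locint _ mD bD.
Qed.

Lemma fB_dist_le c r x1 r1 m : 0 < r -> 0 < r1 ->
  dball dist c r `<=` dball dist x1 r1 ->
  dball dist x1 (2 * r1) `<=` dball dist c (2 ^+ m * r) ->
  `|fB c r - fB x1 r1| <= `|A| * (1 + `|C ^+ m|).
Proof.
move=> r0 r10 sub sub2; rewrite -lee_fin.
apply: le_trans (fB_compat _ _ _ _ r0 r10 sub) _.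
have I0 := integral_inv_lam_ge0 mu_upper_doubling c (dball dist x1 (2 * r1)) r r0.
apply: le_trans (lee_wpmul2r (adde_ge0 _ I0) (_ : A%:E <= `|A|%:E)%E) _.
- by rewrite lee_fin.
- by rewrite lee_fin ler_norm.
rewrite EFinM EFinD lee_wpmul2l ?lee_fin // leeD2l //.
apply: le_trans (integral_inv_lam_annulus mu_upper_doubling measurable_ball
  c r m _ r0 (measurableD (measurable_ball _ _) (measurable_ball _ _)) _) _.
- by move=> z [/sub2 ? ?].
- by rewrite lee_fin ler_norm.
Qed.

Lemma fB_dist_piece_le x r y t m : 0 < t -> t <= r -> dist y x < r + t ->
  2 * t <= (sigma - 1) * r -> (2 * sigma + 1) * r + t <= 2 ^+ m * t ->
  `|fB y t - fB x r| <= 2 * (`|A| * (1 + `|C ^+ m|)).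
Proof.
move=> t0 tr dyx tsr rm.
have r0 : 0 < r := lt_le_trans t0 tr.
have sr0 : 0 < sigma * r by rewrite mulr_gt0.
have rm' : 2 ^+ m * t <= 2 ^+ m * r by rewrite ler_wpM2l // exprn_ge0.
have dxx := dist_refl dist_metric x.
have dxy := dist_sym dist_metric x y.
have le_y : `|fB y t - fB x (sigma * r)| <= `|A| * (1 + `|C ^+ m|).
  by apply: fB_dist_le => //; apply: ball_sub; lra.
have le_x : `|fB x (sigma * r) - fB x r| <= `|A| * (1 + `|C ^+ m|).
  by rewrite distrC; apply: fB_dist_le => //; apply: ball_sub; lra.
have := ler_distD (fB x (sigma * r)) (fB y t) (fB x r); lra.
Qed.

Local Open Scope ereal_scope.

Lemma rbmo_osc_piece_le x r y t m : (0 < t)%R -> (t <= r)%R ->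
  ((rho + 1) * t <= (sigma - 1) * r)%R ->
  ((2 * sigma + 1) * r + t <= 2 ^+ m * t)%R ->
  \int[mu]_(z in dball dist x r `&` dball dist y t) (`|f z - fB x r|)%:E
    <= (`|A| * (3 + 2 * `|C ^+ m|))%:E * mu (dball dist x (sigma * r)).
Proof.
move=> t0 tr trs rm.
have K0 : (0 <= `|A| * (3 + 2 * `|C ^+ m|))%R.
  by rewrite mulr_ge0 // addr_ge0 // mulr_ge0.
have [[z [Bz Byz]]|none] := pselect (exists z, dball dist x r z /\ dball dist y t z);
    last first.
  have -> : dball dist x r `&` dball dist y t = set0.
    by apply/seteqP; split => // w [Bw Byw]; apply: none; exists w.
  by rewrite integral_set0 mule_ge0 ?lee_fin.
have dyx : (dist y x < r + t)%R.
  apply: le_lt_trans (dist_triangle dist_metric y z x) _.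
  by rewrite (dist_sym dist_metric y z) addrC ltrD.
have t_rho : (t <= rho * t)%R by rewrite ler_peMl ?ltW.
set D := dball dist x r `&` dball dist y t.
set S := dball dist x (sigma * r).
have mD : measurable D by exact: measurableI.
have bD : dbounded dist D by exists x, r => w [].
pose c := `|fB y t - fB x r|%R.
have c_le := @fB_dist_piece_le x r y t m t0 tr dyx ltac:(lra) rm.
have mono_S s' z' : (dist z' x + s' <= sigma * r)%R -> mu (dball dist z' s') <= mu S.
  by move=> h; apply: le_measure; rewrite ?inE; [exact: measurable_ball ..|exact: ball_sub].
have piece_y : \int[mu]_(w in D) (`|f w - fB y t|)%:E <= `|A|%:E * mu S.
  apply: le_trans (ge0_subset_integral mu mD (measurable_ball y t)
    (measurable_fun_abs_subr _ _ (measurable_ball y t) (dbounded_dball _ _ _)) _ _) _.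
  - by move=> ? _; rewrite lee_fin.
  - by move=> w [].
  apply: le_trans (f_osc y t t0) _.
  apply: le_trans (lee_wpmul2r (measure_ge0 _ _) (_ : A%:E <= `|A|%:E)) _.
    by rewrite lee_fin ler_norm.
  by rewrite lee_wpmul2l ?lee_fin //; apply: mono_S; lra.
apply: le_trans (_ : _ <= \int[mu]_(w in D) ((`|f w - fB y t|)%:E + c%:E)) _.
  apply: ge0_le_integral => //.
  - exact: measurable_fun_abs_subr.
  - by apply: emeasurable_funD; [exact: measurable_fun_abs_subr|exact: measurable_cst].
  - by move=> w _; rewrite -EFinD lee_fin ler_distD.
rewrite ge0_integralD //; last 2 first.
- exact: measurable_fun_abs_subr.
- by move=> ? _; rewrite lee_fin /c.
rewrite integral_cst // (_ : 3 + _ = 1 + 2 * (1 + `|C ^+ m|))%R; last by ring.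
rewrite mulrDr mulr1 EFinD ge0_muleDl ?lee_fin ?mulr_ge0 // leeD //.
have muD : mu D <= mu S.
  apply: le_trans (mono_S r x _); last by rewrite (dist_refl dist_metric); lra.
  by apply: le_measure; rewrite ?inE // => w [].
apply: le_trans (lee_wpmul2l (_ : 0 <= c%:E) muD) _; first by rewrite lee_fin /c.
by apply: lee_wpmul2r; [exact: measure_ge0|rewrite lee_fin /c; lra].
Qed.

Lemma rbmo_osc_change_param : exists2 A' : R, (A <= A')%R &
  forall x r, (0 < r)%R ->
    \int[mu]_(y in dball dist x r) (`|f y - fB x r|)%:E
      <= A'%:E * mu (dball dist x (sigma * r)).
Proof.
have [N doubling] := dist_doubling.
have [k k_ge] : exists k : nat, ((rho + 1) / (sigma - 1) <= 2 ^+ k)%R.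
  apply/exists_pow2_ge/divr_ge0; last by rewrite subr_ge0 ltW.
  by rewrite addr_ge0 // ltW // (lt_trans ltr01 rho_gt1).
have k_gt0 : (0 < 2 ^+ k :> R)%R by rewrite exprn_gt0.
have k_ge1 : (1 <= 2 ^+ k :> R)%R by rewrite exprn_ege1 // ler1n.
have [m m_ge] : exists m : nat, ((2 * sigma + 1) * 2 ^+ k + 1 <= 2 ^+ m)%R.
  by apply: exists_pow2_ge; rewrite !(addr_ge0, mulr_ge0) ?ltW.
pose K := (`|A| * (3 + 2 * `|C ^+ m|))%R.
have K0 : (0 <= K)%R by rewrite mulr_ge0 // addr_ge0 // mulr_ge0.
exists (Num.max A ((N ^ k)%:R * K))%R; first by rewrite le_max lexx.
move=> x r r0.
have [t t0 rE] : exists2 t, (0 < t)%R & r = (2 ^+ k * t)%R.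
  by exists (r / 2 ^+ k)%R; rewrite ?divr_gt0 // mulrCA mulfV ?mulr1 // lt0r_neq0.
have t_le : (t <= r)%R by rewrite rE; exact: ler_peMl (ltW t0) k_ge1.
have t_rho : ((rho + 1) * t <= (sigma - 1) * r)%R.
  by rewrite rE mulrA ler_wpM2r ?(ltW t0) // mulrC -ler_pdivrMr // subr_gt0.
have t_m : ((2 * sigma + 1) * r + t <= 2 ^+ m * t)%R.
  by have := ler_wpM2r (ltW t0) m_ge; rewrite rE; lra.
have [s [size_s cover_s]] := dball_cover_pow2 doubling k x r r0.
rewrite (_ : r / 2 ^+ k = t)%R in cover_s; last by rewrite rE mulrC mulKf ?lt0r_neq0.
apply: le_trans (ge0_integral_le_sum_cover mu (fun y => dball dist y t) s _ _
  (measurable_ball^~ t) (measurable_ball x r)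
  (measurable_fun_abs_subr _ _ (measurable_ball x r) (dbounded_dball _ _ _))
  _ cover_s) _; first by move=> ? _; rewrite lee_fin.
apply: le_trans (lee_sum s (fun y _ => rbmo_osc_piece_le x r y t m t0 t_le t_rho t_m)) _.
rewrite -ge0_sume_distrl; last by move=> *; rewrite lee_fin.
rewrite sumEFin big_const_seq count_predT iter_addr_0.
apply: lee_wpmul2r; first exact: measure_ge0.
by rewrite lee_fin le_max -[(K *+ _)%R]mulr_natl ler_wpM2r ?ler_nat ?orbT.
Qed.

End rbmo_change_param.

Lemma RBMO_change_param {disp : measure_display} {X : measurableType disp}
    {R : realType} {dist : X -> X -> R} {mu : {measure set X -> \bar R}}
    {lam : X -> R -> R} {C rho sigma : R} {f : X -> R} :
  is_metric dist -> (@measurable disp X = <<s dopen dist >>) ->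
  geom_doubling dist -> upper_doubling dist mu lam C ->
  1 < rho -> 1 < sigma ->
  RBMO dist mu lam rho f -> RBMO dist mu lam sigma f.
Proof.
move=> metric meas doubling updbl rho1 sigma1 [f_loc [A [fB [osc compat]]]].
have [A' AA' osc'] := rbmo_osc_change_param metric meas doubling updbl rho1 sigma1
  f_loc osc compat.
split => //; exists A', fB; split => // x r x1 r1 r0 r10 sub.
apply: le_trans (compat x r x1 r1 r0 r10 sub) _.
apply: lee_wpmul2r; last by rewrite lee_fin.
by rewrite adde_ge0 // (integral_inv_lam_ge0 updbl).
Qed.

Theorem lemma4p4 (disp : measure_display) (X : measurableType disp)
    (R : realType) (dist : X -> X -> R) (mu : {measure set X -> \bar R})
    (lam : X -> R -> R) (C : R) :
  is_metric dist ->
  (@measurable disp X = <<s dopen dist >>) ->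
  geom_doubling dist ->
  finite_on_bounded dist mu ->
  upper_doubling dist mu lam C ->
  forall rho sigma : R, 1 < rho -> 1 < sigma ->
  forall f : X -> R, RBMO dist mu lam rho f <-> RBMO dist mu lam sigma f.
Proof.
move=> metric meas doubling _ updbl rho sigma rho1 sigma1 f.
by split; apply: (RBMO_change_param metric meas doubling updbl).
Qed.
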